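(* Let $\Omega\subset\mathbb{R}^d$ ($d\in\{2,3\}$) be a bounded polytopal Lipschitz domain, $\mathcal{T}_h$ a simplicial mesh of $\Omega$, $\alpha,\tau>0$, $k>0$, and let $\mathbf{m}_h^0\in\mathcal{M}_h$ and $\mathbf{v}_h^0\in\mathcal{K}_h[\mathbf{m}_h^0]$. Consider the nonlinear angular momentum method (defined in the context) and let $i\in\mathbb{N}_0$. Suppose that for each $n=0,\dots,i$, the pair $(\mathbf{m}_h^{n+1},\mathbf{w}_h^{n+1})\in\mathcal{S}^1(\mathcal{T}_h)^3\times\mathcal{S}^1(\mathcal{T}_h)^3$ satisfies the defining equations of the method at step $n$. Then $\mathbf{m}_h^{i+1}\in\mathcal{M}_h$ and $\mathbf{w}_h^{i+1}\in\mathcal{K}_h[\mathbf{m}_h^{i+1}]$.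
   Context: Let $\mathcal{N}_h$ be the set of vertices of $\mathcal{T}_h$ and $\mathcal{S}^1(\mathcal{T}_h)$ the space of continuous, piecewise affine functions on $\mathcal{T}_h$. The nodal hat functions are $\{\varphi_z\}_{z\in\mathcal{N}_h}$ with $\varphi_z(z')=\delta_{zz'}$. Let $\mathcal{I}_h$ denote the nodal interpolant onto $\mathcal{S}^1(\mathcal{T}_h)$, applied componentwise for vector fields. The mass-lumped product is $(\boldsymbol\psi,\boldsymbol\phi)_h=\int_\Omega\mathcal{I}_h[\boldsymbol\psi\cdot\boldsymbol\phi]$ for continuous $\boldsymbol\psi,\boldsymbol\phi:\overline\Omega\to\mathbb{R}^3$, and $\|\cdot\|_h$ is the induced norm. The effective field $\mathbf{h}_{\rm eff}[\mathbf{m}]\in\mathbf{H}^1(\Omega)^*$ is defined by $\langle\mathbf{h}_{\rm eff}[\mathbf{m}],\boldsymbol\phi\rangle=-(\nabla\mathbf{m},\nabla\boldsymbol\phi)_{L^2(\Omega)}$. The map $\mathbf{P}_h:\mathbf{H}^1(\Omega)^*\to\mathcal{S}^1(\mathcal{T}_h)^3$ is defined by $(\mathbf{P}_h\mathbf{u},\boldsymbol\phi_h)_h=\langle\mathbf{u},\boldsymbol\phi_h\rangle$ for all $\boldsymbol\phi_h\in\mathcal{S}^1(\mathcal{T}_h)^3$. Let $\mathcal{M}_h=\{\boldsymbol\phi_h\in\mathcal{S}^1(\mathcal{T}_h)^3:|\boldsymbol\phi_h(z)|=1\ \forall z\in\mathcal{N}_h\}$. For $\boldsymbol\psi_h\in\mathcal{S}^1(\mathcal{T}_h)^3$,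 let $\mathcal{K}_h[\boldsymbol\psi_h]=\{\boldsymbol\phi_h\in\mathcal{S}^1(\mathcal{T}_h)^3:\boldsymbol\psi_h(z)\cdot\boldsymbol\phi_h(z)=0\ \forall z\in\mathcal{N}_h\}$. Notation: $d_t\phi^{i+1}=(\phi^{i+1}-\phi^i)/k$ and $\phi^{i+1/2}=(\phi^{i+1}+\phi^i)/2$. Nonlinear angular momentum method: set $\mathbf{w}_h^0=\mathcal{I}_h[\mathbf{m}_h^0\times\mathbf{v}_h^0]$. For each $i\in\mathbb{N}_0$, find $(\mathbf{m}_h^{i+1},\mathbf{w}_h^{i+1})$ such that for all $\boldsymbol\phi_h,\boldsymbol\psi_h\in\mathcal{S}^1(\mathcal{T}_h)^3$: $$(d_t\mathbf{m}_h^{i+1},\boldsymbol\phi_h)_h=-(\mathbf{m}_h^{i+1/2}\times\mathbf{w}_h^{i+1/2},\boldsymbol\phi_h)_h,$$ $$\tau(d_t\mathbf{w}_h^{i+1},\boldsymbol\psi_h)_h=(\mathbf{m}_h^{i+1/2}\times\mathbf{P}_h\mathbf{h}_{\rm eff}[\mathbf{m}_h^{i+1/2}],\boldsymbol\psi_h)_h-\alpha(\mathbf{m}_h^{i+1/2}\times d_t\mathbf{m}_h^{i+1},\boldsymbol\psi_h)_h-(\mathbf{m}_h^{i+1/2}\times\mathbf{w}_h^{i+1/2},\boldsymbol\psi_h)_h.$$ *)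

From HB Require Import structures.
From mathcomp Require Import all_boot all_order all_algebra.
From mathcomp Require Import reals.
Set Implicit Arguments. Unset Strict Implicit. Unset Printing Implicit Defensive.
Import Order.TTheory GRing.Theory Num.Theory.
Local Open Scope ring_scope.

Definition dot3 {R : realType} (a b : 'rV[R]_3) : R := \sum_(c < 3) a 0 c * b 0 c.

Definition i0_3 : 'I_3 := @Ordinal 3 0 isT.
Definition i1_3 : 'I_3 := @Ordinal 3 1 isT.
Definition i2_3 : 'I_3 := @Ordinal 3 2 isT.

Definition cross3 {R : realType} (a b : 'rV[R]_3) : 'rV[R]_3 :=
  \row_(c < 3)
    (if nat_of_ord c == 0%N then a 0 i1_3 * b 0 i2_3 - a 0 i2_3 * b 0 i1_3
     else if nat_of_ord c == 1%N then a 0 i2_3 * b 0 i0_3 - a 0 i0_3 * b 0 i2_3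
     else a 0 i0_3 * b 0 i1_3 - a 0 i1_3 * b 0 i0_3).

Definition norm3 {R : realType} (a : 'rV[R]_3) : R := Num.sqrt (dot3 a a).

(* A mesh is given by its vertices (indexed by 'I_nv, with coordinates *)
(* coord v in R^d) and its elements (indexed by 'I_ne); element K is   *)
(* the closed d-simplex with vertices coord (elt K j), j < d+1.        *)
(* The domain Omega is the union of the elements.                      *)
Record mesh (R : realType) (d : nat) := Mesh {
  nv : nat;
  ne : nat;
  coord : 'I_nv -> 'rV[R]_d;
  elt : 'I_ne -> 'I_d.+1 -> 'I_nv }.

Arguments coord {R d} m _.
Arguments elt {R d} m _ _.

Section MeshDefs.
Context {R : realType} {d : nat} (T : mesh R d).

Definition edge_mx (K : 'I_(ne T)) : 'M[R]_d :=
  \matrix_(j < d, l < d)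
    (coord T (elt T K (lift ord0 j)) - coord T (elt T K ord0)) 0 l.

Definition vol (K : 'I_(ne T)) : R := `|\det (edge_mx K)| / (d`!)%:R.

Definition verts (K : 'I_(ne T)) : pred 'I_(nv T) :=
  [pred v | v \in codom (elt T K)].

Definition in_hull (S : pred 'I_(nv T)) (x : 'rV[R]_d) : Prop :=
  exists lam : 'I_(nv T) -> R,
    [/\ forall v, 0 <= lam v,
        forall v, ~~ S v -> lam v = 0,
        \sum_v lam v = 1 &
        x = \sum_v lam v *: coord T v].

Definition is_simplicial_mesh : Prop :=
  [/\ injective (coord T),
      forall K, \det (edge_mx K) != 0,
      forall v, exists K j, elt T K j = v,
      forall K K', verts K =i verts K' -> K = K' &
      forall K K' x, in_hull (verts K) x -> in_hull (verts K') x ->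
        in_hull (predI (verts K) (verts K')) x              (* conformity: K ∩ K' is a common face *)
  ].

(* Elements of S^1(T_h)^3 are represented by their nodal values. *)
Definition S1 := 'I_(nv T) -> 'rV[R]_3.

(* constant gradient on K of the piecewise affine field with nodal values u:
   the affine map x |-> u(z_{K,0}) + (x - z_{K,0}) G with G : d x 3,
   i.e. G = B^{-1} D (transpose of the Jacobian). *)
Definition grad (K : 'I_(ne T)) (u : S1) : 'M[R]_(d, 3) :=
  invmx (edge_mx K) *m
  \matrix_(j < d, c < 3) (u (elt T K (lift ord0 j)) - u (elt T K ord0)) 0 c.

(* (grad u, grad v)_{L^2(Omega)} for u, v in S^1(T_h)^3
   (exact integral of the elementwise constant integrand) *)
Definition stiff (u v : S1) : R :=
  \sum_(K < ne T) vol K * \sum_(j < d) \sum_(c < 3) grad K u j c * grad K v j c.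

(* int_Omega I_h[f] for nodal values f : the integral of the continuous
   piecewise affine function with nodal values f (exact: on each simplex
   the integral of an affine function is |K| times the mean of its
   vertex values) *)
Definition int_Ih (f : 'I_(nv T) -> R) : R :=
  \sum_(K < ne T) vol K / (d.+1)%:R * \sum_(j < d.+1) f (elt T K j).

(* mass-lumped product (psi, phi)_h = int_Omega I_h[psi . phi];
   it only depends on the nodal values of psi and phi. *)
Definition lumped (psi phi : S1) : R := int_Ih (fun z => dot3 (psi z) (phi z)).

Definition Mh (phi : S1) : Prop := forall z, norm3 (phi z) = 1.
Definition Kh (psi phi : S1) : Prop := forall z, dot3 (psi z) (phi z) = 0.

(* nodal cross product (nodal values of I_h[psi x phi]) *)
Definition crossh (psi phi : S1) : S1 := fun z => cross3 (psi z) (phi z).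

Definition dtime (k : R) (f : nat -> S1) (n : nat) : S1 :=
  fun z => k^-1 *: (f n.+1 z - f n z).
Definition halfstep (f : nat -> S1) (n : nat) : S1 :=
  fun z => 2^-1 *: (f n.+1 z + f n z).

(* (m^{n+1}, w^{n+1}) satisfies the defining equations of the nonlinear
   angular momentum method at step n.  p plays the role of
   P_h h_eff[m^{n+1/2}], characterised by its defining relation
   (p, phi)_h = <h_eff[m^{n+1/2}], phi> = -(grad m^{n+1/2}, grad phi). *)
Definition angmom_step (alpha tau k : R) (m w : nat -> S1) (n : nat) : Prop :=
  let mh := halfstep m n in
  let wh := halfstep w n in
  exists p : S1,
    [/\ forall phi : S1, lumped p phi = - stiff mh phi,
        forall phi : S1,
          lumped (dtime k m n) phi = - lumped (crossh mh wh) phi &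
        forall psi : S1,
          tau * lumped (dtime k w n) psi =
            lumped (crossh mh p) psi
            - alpha * lumped (crossh mh (dtime k m n)) psi
            - lumped (crossh mh wh) psi].

End MeshDefs.

(* Testing the scheme with a single nodal basis function e φ_z decouples it
   node by node, because the lumped mass matrix is diagonal with positive
   weights.  At a node, the first equation tested with m^{i+1/2} and with
   w^{i+1/2}, and the second tested with m^{i+1/2}, have vanishing right-hand
   sides, since every term there is a cross product with m^{i+1/2}.  By the
   discrete product rule
     a^{i+1}·b^{i+1} - a^i·b^i = k (d_t a^{i+1}·b^{i+1/2} + d_t b^{i+1}·a^{i+1/2}),
   this says that |m_h(z)|^2 and m_h(z)·w_h(z) are conserved, and they equal
   1 and 0 initially. *)
From HB Require Import structures.
From mathcomp Require Import all_boot all_order all_algebra.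
From mathcomp Require Import reals.
From mathcomp Require Import ring.
Import Order.TTheory GRing.Theory Num.Theory.
Local Open Scope ring_scope.

Section VectorAlgebra.
Context {R : realType}.
Implicit Types (a b : 'rV[R]_3).

Lemma dot3E a b :
  dot3 a b = a 0 i0_3 * b 0 i0_3 + a 0 i1_3 * b 0 i1_3 + a 0 i2_3 * b 0 i2_3.
Proof.
rewrite /dot3 !big_ord_recl big_ord0 addr0 addrA /=.
have -> : (lift ord0 (lift ord0 (ord0 : 'I_1)) : 'I_3) = i2_3 by apply: val_inj.
have -> : (lift ord0 (ord0 : 'I_2) : 'I_3) = i1_3 by apply: val_inj.
by have -> : (ord0 : 'I_3) = i0_3 by apply: val_inj.
Qed.

Lemma cross3E a b :
  [/\ cross3 a b 0 i0_3 = a 0 i1_3 * b 0 i2_3 - a 0 i2_3 * b 0 i1_3,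
      cross3 a b 0 i1_3 = a 0 i2_3 * b 0 i0_3 - a 0 i0_3 * b 0 i2_3 &
      cross3 a b 0 i2_3 = a 0 i0_3 * b 0 i1_3 - a 0 i1_3 * b 0 i0_3].
Proof. by rewrite !mxE. Qed.

Lemma dot3C a b : dot3 a b = dot3 b a.
Proof. by rewrite !dot3E; ring. Qed.

Lemma dot3_crossl a b : dot3 (cross3 a b) a = 0.
Proof. by rewrite dot3E; have [-> -> ->] := cross3E a b; ring. Qed.

Lemma dot3_crossr a b : dot3 (cross3 a b) b = 0.
Proof. by rewrite dot3E; have [-> -> ->] := cross3E a b; ring. Qed.

Lemma dot3_ge0 a : 0 <= dot3 a a.
Proof. by apply: sumr_ge0 => c _; rewrite -expr2 sqr_ge0. Qed.

Lemma norm3_eq1 a : (norm3 a = 1) <-> (dot3 a a = 1).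
Proof.
rewrite /norm3 -{1}sqrtr1; split=> [/eqP|->] //.
by rewrite eqr_sqrt ?dot3_ge0 ?ler01 // => /eqP.
Qed.

Lemma dot3_0r a : dot3 a 0 = 0.
Proof. by rewrite /dot3 big1 // => c _; rewrite mxE mulr0. Qed.

End VectorAlgebra.

Lemma dot3_dtime_halfstep {R : realType} {d : nat} {T : mesh R d} (k : R)
    (f g : nat -> S1 T) n z :
  k != 0 ->
  dot3 (f n.+1 z) (g n.+1 z) - dot3 (f n z) (g n z) =
  k * (dot3 (dtime k f n z) (halfstep g n z)
       + dot3 (dtime k g n z) (halfstep f n z)).
Proof. by move=> k_neq0; rewrite /dtime /halfstep !dot3E !mxE; field. Qed.

Section MassLumping.
Context {R : realType} {d : nat} (T : mesh R d).

Definition lumped_weight (z : 'I_(nv T)) : R :=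
  \sum_(K < ne T) vol K / (d.+1)%:R * \sum_(j < d.+1) ((elt T K j == z)%:R : R).

Definition nodal_basis (z : 'I_(nv T)) (e : 'rV[R]_3) : S1 T :=
  fun y => if y == z then e else 0.

Lemma lumped_nodal_basis (psi : S1 T) z e :
  lumped psi (nodal_basis z e) = dot3 (psi z) e * lumped_weight z.
Proof.
rewrite /lumped /int_Ih /lumped_weight mulr_sumr; apply: eq_bigr => K _.
rewrite mulrCA; congr (_ * _); rewrite mulr_sumr; apply: eq_bigr => j _.
rewrite /nodal_basis; case: eqP => [->|_]; first by rewrite mulr1.
by rewrite dot3_0r mulr0.
Qed.

Hypothesis T_mesh : is_simplicial_mesh T.

Lemma lumped_weight_gt0 z : 0 < lumped_weight z.
Proof.
have [_ det_neq0 vertex_in_elt _ _] := T_mesh.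
have [K [j Kj_z]] := vertex_in_elt z.
have weight_gt0 (K' : 'I_(ne T)) : 0 < vol K' / (d.+1)%:R.
  by rewrite /vol !divr_gt0 // ?normr_gt0 ?det_neq0 // ?ltr0n ?fact_gt0.
have count_ge0 (K' : 'I_(ne T)) : 0 <= \sum_(j < d.+1) ((elt T K' j == z)%:R : R).
  by apply: sumr_ge0 => ? _; rewrite ler0n.
rewrite /lumped_weight (bigD1 K) //= ltr_wpDr //.
  by apply: sumr_ge0 => K' _; exact: mulr_ge0 (ltW (weight_gt0 K')) (count_ge0 K').
rewrite mulr_gt0 // (bigD1 j) //= Kj_z eqxx ltr_wpDr //.
by apply: sumr_ge0 => ? _; rewrite ler0n.
Qed.

Lemma lumped_weight_cancel (x y : R) z :
  x * lumped_weight z = y * lumped_weight z -> x = y.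
Proof. by apply: mulIf; rewrite gt_eqF ?lumped_weight_gt0. Qed.

End MassLumping.

Section AngularMomentumStep.
Context {R : realType} {d : nat} {T : mesh R d}.
Hypothesis T_mesh : is_simplicial_mesh T.
Context {alpha tau k : R} {m w : nat -> S1 T} {n : nat}.
Hypotheses (tau_neq0 : tau != 0) (k_neq0 : k != 0).
Hypothesis step : angmom_step alpha tau k m w n.

Lemma angmom_step_nodal_orthogonality z :
  [/\ dot3 (dtime k m n z) (halfstep m n z) = 0,
      dot3 (dtime k m n z) (halfstep w n z) = 0 &
      dot3 (dtime k w n z) (halfstep m n z) = 0].
Proof.
have [p [_ eq_m eq_w]] := step.
have cancel := lumped_weight_cancel T T_mesh.
have test_m e : dot3 (dtime k m n z) e
                = - dot3 (crossh (halfstep m n) (halfstep w n) z) e.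
  by apply: (cancel _ _ z); rewrite mulNr -!lumped_nodal_basis eq_m.
split; rewrite ?test_m ?dot3_crossl ?dot3_crossr ?oppr0 //.
have := eq_w (nodal_basis T z (halfstep m n z)).
rewrite !lumped_nodal_basis mulrA (mulrA alpha) -!mulrBl => /cancel.
rewrite /crossh !dot3_crossl mulr0 !subr0 => /eqP.
by rewrite mulf_eq0 (negbTE tau_neq0) => /eqP.
Qed.

Lemma angmom_step_invariant :
  Mh (m n) -> Kh (m n) (w n) -> Mh (m n.+1) /\ Kh (m n.+1) (w n.+1).
Proof.
move=> m_unit mw_orth; split=> z.
  have [dm_m _ _] := angmom_step_nodal_orthogonality z.
  apply/norm3_eq1; have /norm3_eq1 <- := m_unit z; apply/eqP; rewrite -subr_eq0.
  by rewrite (dot3_dtime_halfstep k) // dm_m addr0 mulr0.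
apply/eqP; rewrite -(mw_orth z) -subr_eq0.
have [_ dm_w dw_m] := angmom_step_nodal_orthogonality z.
by rewrite (dot3_dtime_halfstep k) // dm_w dw_m addr0 mulr0.
Qed.

End AngularMomentumStep.

Theorem proposition3p3 (R : realType) (d : nat) (hd : d = 2%N \/ d = 3%N)
  (T : mesh R d) (HT : is_simplicial_mesh T)
  (alpha tau k : R) (halpha : 0 < alpha) (htau : 0 < tau) (hk : 0 < k)
  (m0 v0 : S1 T) (Hm0 : Mh m0) (Hv0 : Kh m0 v0)
  (m w : nat -> S1 T)
  (Hm_init : m 0%N = m0) (Hw_init : w 0%N = crossh m0 v0)
  (i : nat)
  (Hsteps : forall n, (n <= i)%N -> angmom_step alpha tau k m w n) :
  Mh (m i.+1) /\ Kh (m i.+1) (w i.+1).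
Proof.
suff invariant n : (n <= i.+1)%N -> Mh (m n) /\ Kh (m n) (w n) by exact: invariant.
elim: n => [_ | n IH lt_n_i].
  by rewrite Hm_init Hw_init; split=> // z; rewrite /crossh dot3C dot3_crossl.
have [m_unit mw_orth] := IH (ltnW lt_n_i).
exact: (angmom_step_invariant HT (lt0r_neq0 htau) (lt0r_neq0 hk) (Hsteps n lt_n_i)
          m_unit mw_orth).
Qed.
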